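(* Suppose the functional $\tilde I[\tilde q]=\int_a^b\tilde L(x,\tilde q(x),\dot{\tilde q}(x))\,dx$ is invariant, in the sense (with transformation of the independent variable) described in the context, under the one-parameter group of infinitesimal transformations $\hat x=x+\epsilon\tau(x,\tilde q)+o(\epsilon)$, $\tilde{\hat q}(x)=\tilde q(x)+\epsilon\tilde\zeta(x,\tilde q)+o(\epsilon)$, for every fuzzy-valued function $\tilde q$ with $C^2$ level functions. For $r\in[0,1]$ define, with $\underline L^r,\overline L^r$ and their partial derivatives evaluated at $(x,\underline q^r,\overline q^r,\dot{\underline q}^r,\dot{\overline q}^r)$ and $\underline\zeta^r,\overline\zeta^r,\tau$ evaluated at $(x,\underline q^r,\overline q^r)$, $$\underline C^r=\partial_4\underline L^r\,\underline\zeta^r+\partial_5\underline L^r\,\overline\zeta^r+\big[\underline L^r-\partial_4\underline L^r\,\dot{\underline q}^r-\partial_5\underline L^r\,\dot{\overline q}^r\big]\tau,$$ $$\overline C^r=\partial_4\overline L^r\,\underline\zeta^r+\partial_5\overline L^r\,\overline\zeta^r+\big[\overline L^r-\partial_4\overline L^r\,\dot{\underline q}^r-\partial_5\overline L^r\,\dot{\overline q}^r\big]\tau.$$ Then the fuzzy quantity $\tilde C$ with these lower and upper bounds is conserved: for every $\tilde q$ with $C^2$ level functions satisfying the fuzzy Euler–Lagrange equations, $\frac{d}{dx}\underline C^r=\frac{d}{dx}\overline C^r=0$ for all $r\in[0,1]$.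
   Context: A fuzzy number is a map $\tilde a:\mathbb R\to[0,1]$ that is normal, fuzzy convex, upper semicontinuous and has compact support; its $r$-level sets are compact intervals $[\underline a^r,\overline a^r]$. A fuzzy-valued function $\tilde q$ on $[a,b]$ is described by its level functions $\underline q^r(x),\overline q^r(x)$, $r\in[0,1]$; dots denote derivatives with respect to the independent variable. The fuzzy Lagrangian is given levelwise by $C^2$ functions $\underline L^r,\overline L^r:[a,b]\times\mathbb R^4\to\mathbb R$ evaluated at $(x,\underline q^r,\overline q^r,\dot{\underline q}^r,\dot{\overline q}^r)$, and $\tilde I$ has level endpoints $\int_a^b\underline L^rdx$, $\int_a^b\overline L^rdx$. $\partial_i$ is the partial derivative with respect to the $i$-th argument of $(x,u,v,p,w)$. Fuzzy Euler–Lagrange equations: for all $r$, $\partial_2\underline L^r-\frac{d}{dx}\partial_4\underline L^r=0$, $\partial_3\underline L^r-\frac{d}{dx}\partial_5\underline L^r=0$, $\partial_2\overline L^r-\frac{d}{dx}\partial_4\overline L^r=0$, $\partial_3\overline L^r-\frac{d}{dx}\partial_5\overline L^r=0$. Transformations: $\tau:[a,b]\times\mathbb R^2\to\mathbb R$ and, for each $r$, $\underline\zeta^r,\overline\zeta^r:[a,b]\times\mathbb R^2\to\mathbb R$ are $C^1$. For $\epsilon>0$ and each $r$, the new independent variable is $\hat x(x)=x+\epsilon\tau(x,\underline q^r(x),\overline q^r(x))+o(\epsilon)$ and the transformed level functions are defined by $\underline{\hat q}^r(\hat x(x))=\underline q^r(x)+\epsilon\underline\zeta^r(x,\underline q^r(x),\overline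 q^r(x))+o(\epsilon)$, $\overline{\hat q}^r(\hat x(x))=\overline q^r(x)+\epsilon\overline\zeta^r(x,\underline q^r(x),\overline q^r(x))+o(\epsilon)$, with remainders $C^1$ and $o(\epsilon)$ together with their derivatives; $\dot{\underline{\hat q}}^r(\hat x)$ denotes the derivative with respect to $\hat x$. Invariance: for all $r\in[0,1]$, every $[t_a,t_b]\subseteq[a,b]$ and every $\epsilon>0$, $\int_{t_a}^{t_b}\underline L^r(x,\underline q^r(x),\overline q^r(x),\dot{\underline q}^r(x),\dot{\overline q}^r(x))dx=\int_{\hat x(t_a)}^{\hat x(t_b)}\underline L^r(\hat x,\underline{\hat q}^r(\hat x),\overline{\hat q}^r(\hat x),\dot{\underline{\hat q}}^r(\hat x),\dot{\overline{\hat q}}^r(\hat x))d\hat x$, and likewise for $\overline L^r$. *)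

From Stdlib Require Import Reals Lra.
From Stdlib Require Import ClassicalEpsilon.
Open Scope R_scope.

Definition differentiable_at (f : R -> R) (x : R) : Prop :=
  exists l, derivable_pt_lim f x l.

(** The derivative of f at x (meaningful where f is differentiable). *)
Definition deriv (f : R -> R) (x : R) : R :=
  epsilon (inhabits 0) (fun l => derivable_pt_lim f x l).

Definition C2_fun (f : R -> R) : Prop :=
  (forall x, differentiable_at f x) /\
  (forall x, differentiable_at (deriv f) x) /\
  continuity (deriv (deriv f)).

(** * Functions of 5 real variables (x,u,v,p,w); partial derivatives
    indexed 1..5 as in the paper. *)
Definition fun5 := R -> R -> R -> R -> R -> R.

Definition section5 (f : fun5) (i : nat) (x u v p w : R) : R -> R :=
  match i with
  | 1%nat => fun t => f t u v p w
  | 2%nat => fun t => f x t v p w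
  | 3%nat => fun t => f x u t p w
  | 4%nat => fun t => f x u v t w
  | _ => fun t => f x u v p t
  end.

Definition coord5 (i : nat) (x u v p w : R) : R :=
  match i with
  | 1%nat => x | 2%nat => u | 3%nat => v | 4%nat => p | _ => w
  end.

Definition partial5 (f : fun5) (i : nat) : fun5 :=
  fun x u v p w => deriv (section5 f i x u v p w) (coord5 i x u v p w).

Definition continuous5 (g : fun5) : Prop :=
  forall x u v p w eps, 0 < eps -> exists d, 0 < d /\
    forall x' u' v' p' w',
      Rabs (x' - x) < d -> Rabs (u' - u) < d -> Rabs (v' - v) < d ->
      Rabs (p' - p) < d -> Rabs (w' - w) < d ->
      Rabs (g x' u' v' p' w' - g x u v p w) < eps.

Definition C1_5 (f : fun5) : Prop :=
  continuous5 f /\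
  forall i, (1 <= i <= 5)%nat ->
    (forall x u v p w, differentiable_at (section5 f i x u v p w) (coord5 i x u v p w)) /\
    continuous5 (partial5 f i).

Definition C2_5 (f : fun5) : Prop :=
  C1_5 f /\ forall i, (1 <= i <= 5)%nat -> C1_5 (partial5 f i).

Definition fun3 := R -> R -> R -> R.

Definition section3 (f : fun3) (i : nat) (x u v : R) : R -> R :=
  match i with
  | 1%nat => fun t => f t u v
  | 2%nat => fun t => f x t v
  | _ => fun t => f x u t
  end.

Definition coord3 (i : nat) (x u v : R) : R :=
  match i with 1%nat => x | 2%nat => u | _ => v end.

Definition partial3 (f : fun3) (i : nat) : fun3 :=
  fun x u v => deriv (section3 f i x u v) (coord3 i x u v).

Definition continuous3 (g : fun3) : Prop :=
  forall x u v eps, 0 < eps -> exists d, 0 < d /\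
    forall x' u' v',
      Rabs (x' - x) < d -> Rabs (u' - u) < d -> Rabs (v' - v) < d ->
      Rabs (g x' u' v' - g x u v) < eps.

Definition C1_3 (f : fun3) : Prop :=
  continuous3 f /\
  forall i, (1 <= i <= 3)%nat ->
    (forall x u v, differentiable_at (section3 f i x u v) (coord3 i x u v)) /\
    continuous3 (partial3 f i).

Definition fuzzy_number (A : R -> R) : Prop :=
  (forall y, 0 <= A y <= 1) /\
  (exists y, A y = 1) /\
  (forall y z l, 0 <= l <= 1 -> Rmin (A y) (A z) <= A (l * y + (1 - l) * z)) /\
  (forall y eps, 0 < eps -> exists d, 0 < d /\
      forall z, Rabs (z - y) < d -> A z < A y + eps) /\
  (exists M, forall y, 0 < A y -> Rabs y <= M).

(** y belongs to the r-level set of A: {A >= r} for r in (0,1],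
    closure of the support {A > 0} for r = 0. *)
Definition in_level (A : R -> R) (r y : R) : Prop :=
  (0 < r /\ r <= A y) \/
  (r = 0 /\ forall d, 0 < d -> exists z, Rabs (z - y) < d /\ 0 < A z).

(** qt : [a,b] -> fuzzy numbers, with level functions ql r, qu r:
    [qt x]^r = [ql r x, qu r x]. *)
Definition fuzzy_valued_with_levels (a b : R) (qt : R -> R -> R)
    (ql qu : R -> R -> R) : Prop :=
  forall x, a <= x <= b ->
    fuzzy_number (qt x) /\
    forall r, 0 <= r <= 1 -> forall y, in_level (qt x) r y <-> ql r x <= y <= qu r x.

Definition C2_levels (ql qu : R -> R -> R) : Prop :=
  forall r, 0 <= r <= 1 -> C2_fun (ql r) /\ C2_fun (qu r).

Definition along (L : fun5) (ql qu : R -> R) : R -> R :=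
  fun x => L x (ql x) (qu x) (deriv ql x) (deriv qu x).

Definition fuzzy_EL (a b : R) (Ll Lu : R -> fun5) (ql qu : R -> R -> R) : Prop :=
  forall r, 0 <= r <= 1 -> forall x, a <= x <= b ->
    derivable_pt_lim (along (partial5 (Ll r) 4) (ql r) (qu r)) x
                     (along (partial5 (Ll r) 2) (ql r) (qu r) x) /\
    derivable_pt_lim (along (partial5 (Ll r) 5) (ql r) (qu r)) x
                     (along (partial5 (Ll r) 3) (ql r) (qu r) x) /\
    derivable_pt_lim (along (partial5 (Lu r) 4) (ql r) (qu r)) x
                     (along (partial5 (Lu r) 2) (ql r) (qu r) x) /\
    derivable_pt_lim (along (partial5 (Lu r) 5) (ql r) (qu r)) x
                     (along (partial5 (Lu r) 3) (ql r) (qu r) x).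

Definition small_rem (a b : R) (rho : R -> R -> R) : Prop :=
  forall eta, 0 < eta -> exists d, 0 < d /\
    forall eps, 0 < eps < d -> forall x, a <= x <= b -> Rabs (rho eps x) <= eta * eps.

Definition rem_ok (a b : R) (rho drho : R -> R -> R) : Prop :=
  (forall eps x, 0 < eps -> derivable_pt_lim (rho eps) x (drho eps x)) /\
  (forall eps, 0 < eps -> continuity (drho eps)) /\
  small_rem a b rho /\ small_rem a b drho.

Definition integral_eq (f : R -> R) (a b : R) (g : R -> R) (c d : R) : Prop :=
  exists (p1 : Riemann_integrable f a b) (p2 : Riemann_integrable g c d),
    RiemannInt p1 = RiemannInt p2.

Definition fuzzy_invariant (a b : R) (Ll Lu : R -> fun5) (tau : fun3)
    (zl zu : R -> fun3) : Prop :=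
  forall qt ql qu, fuzzy_valued_with_levels a b qt ql qu -> C2_levels ql qu ->
  forall r, 0 <= r <= 1 ->
  exists (X Ql Qu rho0 rho1 rho2 drho0 drho1 drho2 : R -> R -> R),
    rem_ok a b rho0 drho0 /\ rem_ok a b rho1 drho1 /\ rem_ok a b rho2 drho2 /\
    (forall eps x, 0 < eps -> a <= x <= b ->
       X eps x = x + eps * tau x (ql r x) (qu r x) + rho0 eps x /\
       Ql eps (X eps x) = ql r x + eps * zl r x (ql r x) (qu r x) + rho1 eps x /\
       Qu eps (X eps x) = qu r x + eps * zu r x (ql r x) (qu r x) + rho2 eps x /\
       differentiable_at (Ql eps) (X eps x) /\
       differentiable_at (Qu eps) (X eps x)) /\
    (forall eps ta tb, 0 < eps -> a <= ta -> ta <= tb -> tb <= b ->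
       integral_eq (along (Ll r) (ql r) (qu r)) ta tb
                   (along (Ll r) (Ql eps) (Qu eps)) (X eps ta) (X eps tb) /\
       integral_eq (along (Lu r) (ql r) (qu r)) ta tb
                   (along (Lu r) (Ql eps) (Qu eps)) (X eps ta) (X eps tb)).

Definition noether_C (L : fun5) (tau zl zu : fun3) (ql qu : R -> R) : R -> R :=
  fun x =>
    along (partial5 L 4) ql qu x * zl x (ql x) (qu x)
    + along (partial5 L 5) ql qu x * zu x (ql x) (qu x)
    + (along L ql qu x - along (partial5 L 4) ql qu x * deriv ql x
       - along (partial5 L 5) ql qu x * deriv qu x) * tau x (ql x) (qu x).

From Stdlib Require Import Reals Lra Lia ClassicalEpsilon.
From Coquelicot Require Import Coquelicot.
Open Scope R_scope.

(* Along an extremal, the Euler--Lagrange equations reduce the derivative of the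
   Noether quantity to the Rund--Trautman expression
     d1L tau + d2L zl + d3L zu + d4L (zl' - ql' tau') + d5L (zu' - qu' tau') + L tau'.
   Invariance on every subinterval [ta, tb] forces equality of the integrands:
     L(x, ql, qu, ql', qu') = L(xhat, qlhat, quhat, qlhat'/xhat', quhat'/xhat') * xhat'
   for every eps > 0.  The right side is therefore constant in eps, while the chain
   rule in five variables computes its derivative at eps = 0+ as the Rund--Trautman
   expression, which hence vanishes on (a, b), and on [a, b] by continuity. *)

Lemma derivable_pt_lim_deriv f x :
  differentiable_at f x -> derivable_pt_lim f x (deriv f x).
Proof. exact (epsilon_spec (inhabits 0) (fun l => derivable_pt_lim f x l)). Qed.

Lemma continuity_pt_ball f x : continuity_pt f x ->
  forall eps, 0 < eps -> exists d, 0 < d /\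
    forall y, Rabs (y - x) < d -> Rabs (f y - f x) < eps.
Proof.
  intros H eps Heps. destruct (H eps Heps) as [d [Hd Hf]].
  exists d; split; [exact Hd|]. intros y Hy.
  destruct (Req_dec y x) as [->|Hyx].
  - rewrite Rminus_diag, Rabs_R0. exact Heps.
  - apply (Hf y). split; [split; [exact I | congruence] | exact Hy].
Qed.

Lemma exists_pos_below5 d1 d2 d3 d4 d5 :
  0 < d1 -> 0 < d2 -> 0 < d3 -> 0 < d4 -> 0 < d5 ->
  exists d, 0 < d /\ d <= d1 /\ d <= d2 /\ d <= d3 /\ d <= d4 /\ d <= d5.
Proof.
  intros. exists (Rmin d1 (Rmin d2 (Rmin d3 (Rmin d4 d5)))).
  repeat split; repeat (apply Rmin_glb_lt || apply Rmin_pos); auto;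
    repeat (apply Rle_refl || apply Rmin_l || (eapply Rle_trans; [apply Rmin_r|])).
Qed.

Lemma limit1_in_ext (f g : R -> R) D l x0 :
  (forall x, D x -> f x = g x) -> limit1_in f D l x0 -> limit1_in g D l x0.
Proof.
  intros E H eps Heps. destruct (H eps Heps) as [d [Hd Hf]].
  exists d; split; [exact Hd|]. intros x [Dx Hx]. rewrite <- E by exact Dx. exact (Hf x (conj Dx Hx)).
Qed.

Lemma limit1_in_const D c x0 : limit1_in (fun _ => c) D c x0.
Proof. exact (limit_free (fun _ => c) D 0 x0). Qed.

Definition has_partials5 (f D1 D2 D3 D4 D5 : fun5) : Prop :=
  forall x u v p w,
    derivable_pt_lim (fun t => f t u v p w) x (D1 x u v p w) /\
    derivable_pt_lim (fun t => f x t v p w) u (D2 x u v p w) /\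
    derivable_pt_lim (fun t => f x u t p w) v (D3 x u v p w) /\
    derivable_pt_lim (fun t => f x u v t w) p (D4 x u v p w) /\
    derivable_pt_lim (fun t => f x u v p t) w (D5 x u v p w).

Lemma C1_5_has_partials f :
  C1_5 f -> has_partials5 f (partial5 f 1) (partial5 f 2) (partial5 f 3) (partial5 f 4) (partial5 f 5).
Proof.
  intros [_ Hf] x u v p w.
  repeat split; apply derivable_pt_lim_deriv;
    [apply (Hf 1%nat) | apply (Hf 2%nat) | apply (Hf 3%nat) | apply (Hf 4%nat) | apply (Hf 5%nat)]; lia.
Qed.

Lemma C1_5_continuous_partial f i : C1_5 f -> (1 <= i <= 5)%nat -> continuous5 (partial5 f i).
Proof. intros [_ Hf] Hi. apply (Hf i Hi). Qed.

Lemma C1_3_continuous_partial g i : C1_3 g -> (1 <= i <= 3)%nat -> continuous3 (partial3 g i).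
Proof. intros [_ Hg] Hi. apply (Hg i Hi). Qed.

Lemma mvt_linear_bound (g dg : R -> R) c h K eta :
  (forall t, derivable_pt_lim g t (dg t)) ->
  (forall t, Rabs (t - c) <= Rabs h -> Rabs (dg t - K) <= eta) ->
  Rabs (g (c + h) - g c - K * h) <= eta * Rabs h.
Proof.
  intros Hg Hdg.
  destruct (MVT_abs (fun t => g t - K * t) (fun t => dg t - K) c (c + h)) as [t [E Ht]].
  - intros t _. replace (dg t - K) with (dg t - (0 * t + K * 1)) by ring.
    apply derivable_pt_lim_minus; [apply Hg|].
    apply derivable_pt_lim_mult; [apply derivable_pt_lim_const | apply derivable_pt_lim_id].
  - replace (g (c + h) - g c - K * h) with (g (c + h) - K * (c + h) - (g c - K * c)) by ring.
    rewrite E, Rplus_minus_l. apply Rmult_le_compat_r; [apply Rabs_pos|]. apply Hdg.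
    unfold Rmin, Rmax in Ht. destruct (Rle_dec c (c + h)).
    + rewrite !Rabs_right; lra.
    + rewrite !Rabs_left1; lra.
Qed.

(* The increment is telescoped one coordinate at a time, and each step is
   estimated by the mean value theorem. *)
Lemma expansion5 f D1 D2 D3 D4 D5 :
  has_partials5 f D1 D2 D3 D4 D5 ->
  continuous5 D1 -> continuous5 D2 -> continuous5 D3 -> continuous5 D4 -> continuous5 D5 ->
  forall x u v p w eta, 0 < eta -> exists d, 0 < d /\
    forall x' u' v' p' w',
      Rabs (x' - x) < d -> Rabs (u' - u) < d -> Rabs (v' - v) < d ->
      Rabs (p' - p) < d -> Rabs (w' - w) < d ->
      Rabs (f x' u' v' p' w' - f x u v p w
            - (D1 x u v p w * (x' - x) + D2 x u v p w * (u' - u) + D3 x u v p w * (v' - v)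
               + D4 x u v p w * (p' - p) + D5 x u v p w * (w' - w)))
      <= eta * (Rabs (x' - x) + Rabs (u' - u) + Rabs (v' - v) + Rabs (p' - p) + Rabs (w' - w)).
Proof.
  intros Hf C1 C2 C3 C4 C5 x u v p w eta Heta.
  destruct (C1 x u v p w eta Heta) as [d1 [Hd1 B1]].
  destruct (C2 x u v p w eta Heta) as [d2 [Hd2 B2]].
  destruct (C3 x u v p w eta Heta) as [d3 [Hd3 B3]].
  destruct (C4 x u v p w eta Heta) as [d4 [Hd4 B4]].
  destruct (C5 x u v p w eta Heta) as [d5 [Hd5 B5]].
  destruct (exists_pos_below5 d1 d2 d3 d4 d5) as [d (Hd & L1 & L2 & L3 & L4 & L5)]; auto.
  exists d; split; [exact Hd|]. intros x' u' v' p' w' H1 H2 H3 H4 H5.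
  set (h1 := x' - x) in *. set (h2 := u' - u) in *. set (h3 := v' - v) in *.
  set (h4 := p' - p) in *. set (h5 := w' - w) in *.
  replace x' with (x + h1) by (unfold h1; ring). replace u' with (u + h2) by (unfold h2; ring).
  replace v' with (v + h3) by (unfold h3; ring). replace p' with (p + h4) by (unfold h4; ring).
  replace w' with (w + h5) by (unfold h5; ring).
  assert (M1 := mvt_linear_bound (fun t => f t (u + h2) (v + h3) (p + h4) (w + h5))
    (fun t => D1 t (u + h2) (v + h3) (p + h4) (w + h5)) x h1 (D1 x u v p w) eta
    (fun t => proj1 (Hf t _ _ _ _))).
  assert (M2 := mvt_linear_bound (fun t => f x t (v + h3) (p + h4) (w + h5))
    (fun t => D2 x t (v + h3) (p + h4) (w + h5)) u h2 (D2 x u v p w) eta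
    (fun t => proj1 (proj2 (Hf _ t _ _ _)))).
  assert (M3 := mvt_linear_bound (fun t => f x u t (p + h4) (w + h5))
    (fun t => D3 x u t (p + h4) (w + h5)) v h3 (D3 x u v p w) eta
    (fun t => proj1 (proj2 (proj2 (Hf _ _ t _ _))))).
  assert (M4 := mvt_linear_bound (fun t => f x u v t (w + h5))
    (fun t => D4 x u v t (w + h5)) p h4 (D4 x u v p w) eta
    (fun t => proj1 (proj2 (proj2 (proj2 (Hf _ _ _ t _)))))).
  assert (M5 := mvt_linear_bound (fun t => f x u v p t)
    (fun t => D5 x u v p t) w h5 (D5 x u v p w) eta
    (fun t => proj2 (proj2 (proj2 (proj2 (Hf _ _ _ _ t)))))).
  cbv beta in M1, M2, M3, M4, M5.
  assert (Close : forall y h dy, Rabs h < d -> d <= dy -> Rabs (y + h - y) < dy)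
    by (intros y h dy Hh Hdy; rewrite Rplus_minus_l; lra).
  assert (Same : forall y dy, 0 < dy -> Rabs (y - y) < dy)
    by (intros y dy Hdy; rewrite Rminus_diag, Rabs_R0; exact Hdy).
  specialize (M1 ltac:(intros t Ht; left; apply B1; eauto; lra)).
  specialize (M2 ltac:(intros t Ht; left; apply B2; eauto; lra)).
  specialize (M3 ltac:(intros t Ht; left; apply B3; eauto; lra)).
  specialize (M4 ltac:(intros t Ht; left; apply B4; eauto; lra)).
  specialize (M5 ltac:(intros t Ht; left; apply B5; eauto; lra)).
  apply Rabs_le_between in M1, M2, M3, M4, M5. apply Rabs_le_between. lra.
Qed.

(* A derivative at [0] taken within [D], with [y] standing for the value at [0]:
   the transformations are only given for [eps > 0], so [phi 0] is not available. *)
Definition has_slope (D : R -> Prop) (phi : R -> R) (y c : R) : Prop :=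
  limit1_in (fun e => (phi e - y) / e) D c 0.

Lemma has_slope_eq D phi y c y' c' :
  y = y' -> c = c' -> has_slope D phi y c -> has_slope D phi y' c'.
Proof. now intros -> ->. Qed.

Lemma has_slope_ext D phi psi y c :
  (forall e, D e -> phi e = psi e) -> has_slope D phi y c -> has_slope D psi y c.
Proof. intros E. apply limit1_in_ext. intros e De. now rewrite E. Qed.

Lemma has_slope_subdomain D D' phi y c :
  (forall e, D' e -> D e) -> has_slope D phi y c -> has_slope D' phi y c.
Proof.
  intros HD H eps Heps. destruct (H eps Heps) as [d [Hd Hf]].
  exists d; split; [exact Hd|]. intros e [De He]. exact (Hf e (conj (HD e De) He)).
Qed.

Lemma adhDa_right_interval e0 : 0 < e0 -> adhDa (fun e => 0 < e < e0) 0.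
Proof.
  intros He0 al Hal. exists (Rmin al e0 / 2).
  assert (Rmin al e0 <= al) by apply Rmin_l. assert (Rmin al e0 <= e0) by apply Rmin_r.
  assert (0 < Rmin al e0) by (apply Rmin_pos; lra).
  split; [lra|]. unfold Rdist. rewrite Rminus_0_r, Rabs_right; lra.
Qed.

Lemma derivable_pt_lim_has_slope f t l :
  derivable_pt_lim f t l <-> has_slope (fun h => h <> 0) (fun h => f (t + h)) (f t) l.
Proof.
  split.
  - intros H eps Heps. destruct (H eps Heps) as [d Hd].
    exists d; split; [apply cond_pos|]. intros h [Hh0 Hh]. simpl in *. unfold Rdist in *.
    rewrite Rminus_0_r in Hh. exact (Hd h Hh0 Hh).
  - intros H eps Heps. destruct (H eps Heps) as [d [Hd Hf]].
    exists (mkposreal d Hd). intros h Hh0 Hh. apply (Hf h). simpl. unfold Rdist.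
    rewrite Rminus_0_r. now split.
Qed.

Section Slope.

Variable D : R -> Prop.
Hypothesis HD : forall e, D e -> e <> 0.

Lemma has_slope_const k : has_slope D (fun _ => k) k 0.
Proof.
  apply (limit1_in_ext (fun _ => 0)); [|apply limit1_in_const].
  intros e _. unfold Rdiv. ring.
Qed.

Lemma has_slope_linear c : has_slope D (fun e => e * c) 0 c.
Proof.
  apply (limit1_in_ext (fun _ => c)); [|apply limit1_in_const].
  intros e De. field. exact (HD e De).
Qed.

Lemma has_slope_id : has_slope D (fun e => e) 0 1.
Proof.
  apply (limit1_in_ext (fun _ => 1)); [|apply limit1_in_const].
  intros e De. field. exact (HD e De).
Qed.

Lemma has_slope_plus phi psi y1 y2 c1 c2 :
  has_slope D phi y1 c1 -> has_slope D psi y2 c2 ->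
  has_slope D (fun e => phi e + psi e) (y1 + y2) (c1 + c2).
Proof.
  intros H1 H2. apply (limit1_in_ext (fun e => (phi e - y1) / e + (psi e - y2) / e)).
  - intros e _. unfold Rdiv. ring.
  - exact (limit_plus _ _ _ _ _ _ H1 H2).
Qed.

Lemma has_slope_affine r y c :
  has_slope D r 0 0 -> has_slope D (fun e => y + e * c + r e) y c.
Proof.
  intros Hr. apply (has_slope_eq _ _ (y + 0 + 0) (0 + c + 0)); [ring|ring|].
  apply has_slope_plus; [apply has_slope_plus|]; auto using has_slope_const, has_slope_linear.
Qed.

Lemma has_slope_limit phi y c : has_slope D phi y c -> limit1_in phi D y 0.
Proof.
  intros H.
  assert (L := limit_plus _ _ D _ _ 0 (limit1_in_const D y 0)
                 (limit_mul _ _ D _ _ 0 (lim_x D 0) H)).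
  rewrite Rmult_0_l, Rplus_0_r in L. revert L. apply limit1_in_ext.
  intros e De. field. exact (HD e De).
Qed.

Lemma has_slope_mult phi psi y1 y2 c1 c2 :
  has_slope D phi y1 c1 -> has_slope D psi y2 c2 ->
  has_slope D (fun e => phi e * psi e) (y1 * y2) (c1 * y2 + y1 * c2).
Proof.
  intros H1 H2.
  apply (limit1_in_ext (fun e => (phi e - y1) / e * psi e + y1 * ((psi e - y2) / e))).
  - intros e De. field. exact (HD e De).
  - apply limit_plus; apply limit_mul; auto using limit1_in_const.
    exact (has_slope_limit _ _ _ H2).
Qed.

Lemma has_slope_inv psi y c :
  (forall e, D e -> psi e <> 0) -> y <> 0 -> has_slope D psi y c ->
  has_slope D (fun e => / psi e) (/ y) (- c / (y * y)).
Proof.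
  intros Hpsi Hy H. replace (- c / (y * y)) with (- c * / y * / y) by (field; exact Hy).
  apply (limit1_in_ext (fun e => - ((psi e - y) / e) * / psi e * / y)).
  - intros e De. field. auto.
  - apply limit_mul; [apply limit_mul|].
    + exact (limit_Ropp _ _ _ _ H).
    + exact (limit_inv _ _ _ _ (has_slope_limit _ _ _ H) Hy).
    + apply limit1_in_const.
Qed.

Lemma has_slope_unique phi y c c' :
  adhDa D 0 -> has_slope D phi y c -> has_slope D phi y c' -> c = c'.
Proof. apply single_limit. Qed.

Lemma has_slope_bound phi y c : has_slope D phi y c ->
  forall d, 0 < d -> exists a, 0 < a /\ forall e, D e -> Rabs e < a ->
    Rabs (phi e - y) <= (Rabs c + 1) * Rabs e /\ Rabs (phi e - y) < d.
Proof.
  intros H d Hd. destruct (H 1 Rlt_0_1) as [a0 [Ha0 Hq]].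
  assert (Hc : 0 < Rabs c + 1) by (generalize (Rabs_pos c); lra).
  exists (Rmin a0 (d / (Rabs c + 1))).
  split; [apply Rmin_pos; [lra | apply Rdiv_lt_0_compat; lra]|].
  intros e De He. assert (He0 := HD e De).
  assert (Ha : Rabs e < a0) by (eapply Rlt_le_trans; [exact He | apply Rmin_l]).
  assert (Hb : Rabs e < d / (Rabs c + 1)) by (eapply Rlt_le_trans; [exact He | apply Rmin_r]).
  assert (B : Rabs (phi e - y) <= (Rabs c + 1) * Rabs e).
  { specialize (Hq e). simpl in Hq. unfold Rdist in Hq. rewrite Rminus_0_r in Hq.
    specialize (Hq (conj De Ha)).
    replace (phi e - y) with ((phi e - y) / e * e) by (field; exact He0).
    rewrite Rabs_mult. apply Rmult_le_compat_r; [apply Rabs_pos|].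
    generalize (Rabs_triang_inv ((phi e - y) / e) c). lra. }
  split; [exact B|]. eapply Rle_lt_trans; [exact B|].
  apply (Rmult_lt_compat_l (Rabs c + 1)) in Hb; [|exact Hc].
  replace ((Rabs c + 1) * (d / (Rabs c + 1))) with d in Hb by (field; lra). exact Hb.
Qed.

Lemma has_slope_little_o E Y c :
  (forall eta, 0 < eta -> exists a, 0 < a /\
     forall e, D e -> Rabs e < a -> Rabs (E e) <= eta * Rabs (Y e)) ->
  has_slope D Y 0 c -> has_slope D E 0 0.
Proof.
  intros HE HY eps Heps.
  assert (Hc : 0 < Rabs c + 1) by (generalize (Rabs_pos c); lra).
  assert (Heta : 0 < eps / (2 * (Rabs c + 1))) by (apply Rdiv_lt_0_compat; lra).
  destruct (HE _ Heta) as [a1 [Ha1 B1]].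
  destruct (has_slope_bound _ _ _ HY 1 Rlt_0_1) as [a2 [Ha2 B2]].
  exists (Rmin a1 a2). split; [apply Rmin_pos; assumption|].
  intros e [De He]. simpl in *. unfold Rdist in *. rewrite Rminus_0_r in *.
  assert (He1 : Rabs e < a1) by (eapply Rlt_le_trans; [exact He | apply Rmin_l]).
  assert (He2 : Rabs e < a2) by (eapply Rlt_le_trans; [exact He | apply Rmin_r]).
  assert (He0 := HD e De). assert (Hae : 0 < Rabs e) by (apply Rabs_pos_lt; exact He0).
  specialize (B1 e De He1). destruct (B2 e De He2) as [B2' _]. rewrite Rminus_0_r in B2'.
  rewrite Rminus_0_r, Rabs_div by exact He0.
  apply Rle_lt_trans with (eps / 2); [|lra]. apply Rle_div_l; [exact Hae|].
  eapply Rle_trans; [exact B1|].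
  replace (eps / 2 * Rabs e) with (eps / (2 * (Rabs c + 1)) * ((Rabs c + 1) * Rabs e))
    by (field; lra).
  apply Rmult_le_compat_l; lra.
Qed.

Lemma has_slope_comp5 f D1 D2 D3 D4 D5 phi1 phi2 phi3 phi4 phi5 y1 y2 y3 y4 y5 c1 c2 c3 c4 c5 :
  has_partials5 f D1 D2 D3 D4 D5 ->
  continuous5 D1 -> continuous5 D2 -> continuous5 D3 -> continuous5 D4 -> continuous5 D5 ->
  has_slope D phi1 y1 c1 -> has_slope D phi2 y2 c2 -> has_slope D phi3 y3 c3 ->
  has_slope D phi4 y4 c4 -> has_slope D phi5 y5 c5 ->
  has_slope D (fun e => f (phi1 e) (phi2 e) (phi3 e) (phi4 e) (phi5 e)) (f y1 y2 y3 y4 y5)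
    (D1 y1 y2 y3 y4 y5 * c1 + D2 y1 y2 y3 y4 y5 * c2 + D3 y1 y2 y3 y4 y5 * c3
     + D4 y1 y2 y3 y4 y5 * c4 + D5 y1 y2 y3 y4 y5 * c5).
Proof.
  intros Hf C1 C2 C3 C4 C5 S1 S2 S3 S4 S5.
  set (E := fun e =>
    f (phi1 e) (phi2 e) (phi3 e) (phi4 e) (phi5 e) - f y1 y2 y3 y4 y5
    - (D1 y1 y2 y3 y4 y5 * (phi1 e - y1) + D2 y1 y2 y3 y4 y5 * (phi2 e - y2)
       + D3 y1 y2 y3 y4 y5 * (phi3 e - y3) + D4 y1 y2 y3 y4 y5 * (phi4 e - y4)
       + D5 y1 y2 y3 y4 y5 * (phi5 e - y5))).
  assert (SE : has_slope D E 0 0).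
  { apply (has_slope_little_o E (fun e => e) 1); [|exact has_slope_id].
    intros eta Heta.
    set (K := Rabs c1 + 1 + (Rabs c2 + 1) + (Rabs c3 + 1) + (Rabs c4 + 1) + (Rabs c5 + 1)).
    assert (HK : 0 < K)
      by (unfold K; generalize (Rabs_pos c1) (Rabs_pos c2) (Rabs_pos c3) (Rabs_pos c4) (Rabs_pos c5); lra).
    assert (HeK : 0 < eta / K) by (apply Rdiv_lt_0_compat; lra).
    destruct (expansion5 f D1 D2 D3 D4 D5 Hf C1 C2 C3 C4 C5 y1 y2 y3 y4 y5 _ HeK) as [d [Hd Hexp]].
    destruct (has_slope_bound _ _ _ S1 d Hd) as [a1 [Ha1 B1]].
    destruct (has_slope_bound _ _ _ S2 d Hd) as [a2 [Ha2 B2]].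
    destruct (has_slope_bound _ _ _ S3 d Hd) as [a3 [Ha3 B3]].
    destruct (has_slope_bound _ _ _ S4 d Hd) as [a4 [Ha4 B4]].
    destruct (has_slope_bound _ _ _ S5 d Hd) as [a5 [Ha5 B5]].
    destruct (exists_pos_below5 a1 a2 a3 a4 a5) as [a (Ha & L1 & L2 & L3 & L4 & L5)]; auto.
    exists a; split; [exact Ha|]. intros e De He.
    destruct (B1 e De ltac:(lra)) as [O1 P1]. destruct (B2 e De ltac:(lra)) as [O2 P2].
    destruct (B3 e De ltac:(lra)) as [O3 P3]. destruct (B4 e De ltac:(lra)) as [O4 P4].
    destruct (B5 e De ltac:(lra)) as [O5 P5].
    eapply Rle_trans; [exact (Hexp _ _ _ _ _ P1 P2 P3 P4 P5)|].
    replace (eta * Rabs e) with (eta / K * (K * Rabs e)) by (field; lra).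
    apply Rmult_le_compat_l; [lra|]. unfold K. lra. }
  unfold has_slope in *.
  match goal with |- limit1_in _ _ ?l _ => replace l with (0 + l) by ring end.
  apply (limit1_in_ext (fun e => (E e - 0) / e
    + (D1 y1 y2 y3 y4 y5 * ((phi1 e - y1) / e) + D2 y1 y2 y3 y4 y5 * ((phi2 e - y2) / e)
       + D3 y1 y2 y3 y4 y5 * ((phi3 e - y3) / e) + D4 y1 y2 y3 y4 y5 * ((phi4 e - y4) / e)
       + D5 y1 y2 y3 y4 y5 * ((phi5 e - y5) / e)))).
  - intros e De. unfold E. field. exact (HD e De).
  - apply limit_plus; [exact SE|].
    repeat apply limit_plus; apply limit_mul; auto using limit1_in_const.
Qed.

End Slope.

Lemma derivable_pt_lim_comp5 f D1 D2 D3 D4 D5 g1 g2 g3 g4 g5 d1 d2 d3 d4 d5 t :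
  has_partials5 f D1 D2 D3 D4 D5 ->
  continuous5 D1 -> continuous5 D2 -> continuous5 D3 -> continuous5 D4 -> continuous5 D5 ->
  derivable_pt_lim g1 t d1 -> derivable_pt_lim g2 t d2 -> derivable_pt_lim g3 t d3 ->
  derivable_pt_lim g4 t d4 -> derivable_pt_lim g5 t d5 ->
  derivable_pt_lim (fun s => f (g1 s) (g2 s) (g3 s) (g4 s) (g5 s)) t
    (D1 (g1 t) (g2 t) (g3 t) (g4 t) (g5 t) * d1 + D2 (g1 t) (g2 t) (g3 t) (g4 t) (g5 t) * d2
     + D3 (g1 t) (g2 t) (g3 t) (g4 t) (g5 t) * d3 + D4 (g1 t) (g2 t) (g3 t) (g4 t) (g5 t) * d4
     + D5 (g1 t) (g2 t) (g3 t) (g4 t) (g5 t) * d5).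
Proof.
  intros Hf C1 C2 C3 C4 C5 H1 H2 H3 H4 H5.
  apply derivable_pt_lim_has_slope.
  apply (has_slope_comp5 _ (fun h Hh => Hh)); auto; apply derivable_pt_lim_has_slope; assumption.
Qed.

Lemma continuity_pt_comp5 g g1 g2 g3 g4 g5 t :
  continuous5 g -> continuity_pt g1 t -> continuity_pt g2 t -> continuity_pt g3 t ->
  continuity_pt g4 t -> continuity_pt g5 t ->
  continuity_pt (fun s => g (g1 s) (g2 s) (g3 s) (g4 s) (g5 s)) t.
Proof.
  intros Cg C1 C2 C3 C4 C5 eps Heps.
  destruct (Cg (g1 t) (g2 t) (g3 t) (g4 t) (g5 t) eps Heps) as [d [Hd Bg]].
  destruct (continuity_pt_ball _ _ C1 d Hd) as [a1 [Ha1 B1]].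
  destruct (continuity_pt_ball _ _ C2 d Hd) as [a2 [Ha2 B2]].
  destruct (continuity_pt_ball _ _ C3 d Hd) as [a3 [Ha3 B3]].
  destruct (continuity_pt_ball _ _ C4 d Hd) as [a4 [Ha4 B4]].
  destruct (continuity_pt_ball _ _ C5 d Hd) as [a5 [Ha5 B5]].
  destruct (exists_pos_below5 a1 a2 a3 a4 a5) as [a (Ha & L1 & L2 & L3 & L4 & L5)]; auto.
  exists a; split; [lra|]. intros s [_ Hs]. simpl in *. unfold Rdist in *.
  apply Bg; [apply B1 | apply B2 | apply B3 | apply B4 | apply B5]; lra.
Qed.


Lemma derivable_pt_lim_continuity_pt f x l : derivable_pt_lim f x l -> continuity_pt f x.
Proof. intros H. apply derivable_continuous_pt. exact (exist _ l H). Qed.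

Lemma C2_fun_derivable q x : C2_fun q -> derivable_pt_lim q x (deriv q x).
Proof. intros [Hq _]. apply derivable_pt_lim_deriv, Hq. Qed.

Lemma C2_fun_derivable_deriv q x : C2_fun q -> derivable_pt_lim (deriv q) x (deriv (deriv q) x).
Proof. intros (_ & Hq & _). apply derivable_pt_lim_deriv, Hq. Qed.

Lemma C2_fun_continuity q x : C2_fun q -> continuity_pt q x.
Proof. intros Hq. exact (derivable_pt_lim_continuity_pt _ _ _ (C2_fun_derivable q x Hq)). Qed.

Lemma C2_fun_continuity_deriv q x : C2_fun q -> continuity_pt (deriv q) x.
Proof. intros Hq. exact (derivable_pt_lim_continuity_pt _ _ _ (C2_fun_derivable_deriv q x Hq)). Qed.

Definition dalong (L : fun5) (q Q : R -> R) (x : R) : R :=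
  along (partial5 L 1) q Q x + along (partial5 L 2) q Q x * deriv q x
  + along (partial5 L 3) q Q x * deriv Q x + along (partial5 L 4) q Q x * deriv (deriv q) x
  + along (partial5 L 5) q Q x * deriv (deriv Q) x.

Definition along3 (g : fun3) (q Q : R -> R) : R -> R := fun x => g x (q x) (Q x).

Definition dalong3 (g : fun3) (q Q : R -> R) (x : R) : R :=
  along3 (partial3 g 1) q Q x + along3 (partial3 g 2) q Q x * deriv q x
  + along3 (partial3 g 3) q Q x * deriv Q x.

Lemma derivable_pt_lim_along_partials f D1 D2 D3 D4 D5 q Q x :
  has_partials5 f D1 D2 D3 D4 D5 ->
  continuous5 D1 -> continuous5 D2 -> continuous5 D3 -> continuous5 D4 -> continuous5 D5 ->
  C2_fun q -> C2_fun Q ->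
  derivable_pt_lim (along f q Q) x
    (along D1 q Q x + along D2 q Q x * deriv q x + along D3 q Q x * deriv Q x
     + along D4 q Q x * deriv (deriv q) x + along D5 q Q x * deriv (deriv Q) x).
Proof.
  intros Hf C1 C2 C3 C4 C5 Hq HQ.
  refine (eq_ind _ (derivable_pt_lim _ x) _ _ _).
  - exact (derivable_pt_lim_comp5 f D1 D2 D3 D4 D5 (fun s => s) q Q (deriv q) (deriv Q) _ _ _ _ _ x
      Hf C1 C2 C3 C4 C5 (derivable_pt_lim_id x) (C2_fun_derivable q x Hq) (C2_fun_derivable Q x HQ)
      (C2_fun_derivable_deriv q x Hq) (C2_fun_derivable_deriv Q x HQ)).
  - unfold along. ring.
Qed.

Lemma derivable_pt_lim_along L q Q x :
  C1_5 L -> C2_fun q -> C2_fun Q -> derivable_pt_lim (along L q Q) x (dalong L q Q x).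
Proof.
  intros HL Hq HQ. apply derivable_pt_lim_along_partials; auto using C1_5_has_partials;
    apply C1_5_continuous_partial; auto; lia.
Qed.

Lemma continuity_pt_along f q Q x :
  continuous5 f -> C2_fun q -> C2_fun Q -> continuity_pt (along f q Q) x.
Proof.
  intros Hf Hq HQ. apply continuity_pt_comp5; auto using C2_fun_continuity, C2_fun_continuity_deriv.
  exact (derivable_pt_lim_continuity_pt _ _ _ (derivable_pt_lim_id x)).
Qed.

Definition lift3 (g : fun3) : fun5 := fun x u v _ _ => g x u v.

Lemma continuous5_lift3 g : continuous3 g -> continuous5 (lift3 g).
Proof.
  intros Hg x u v p w eps Heps. destruct (Hg x u v eps Heps) as [d [Hd B]].
  exists d; split; [exact Hd|]. intros. apply B; assumption.
Qed.

Lemma C1_3_has_partials_lift3 g : C1_3 g ->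
  has_partials5 (lift3 g) (lift3 (partial3 g 1)) (lift3 (partial3 g 2)) (lift3 (partial3 g 3))
    (lift3 (fun _ _ _ => 0)) (lift3 (fun _ _ _ => 0)).
Proof.
  intros [_ Hg] x u v p w. unfold lift3.
  repeat split; try apply derivable_pt_lim_const; apply derivable_pt_lim_deriv;
    [apply (Hg 1%nat) | apply (Hg 2%nat) | apply (Hg 3%nat)]; lia.
Qed.

Lemma continuity_pt_along3 g q Q x :
  continuous3 g -> C2_fun q -> C2_fun Q -> continuity_pt (along3 g q Q) x.
Proof. intros Hg Hq HQ. exact (continuity_pt_along (lift3 g) q Q x (continuous5_lift3 g Hg) Hq HQ). Qed.

Lemma derivable_pt_lim_along3 g q Q x :
  C1_3 g -> C2_fun q -> C2_fun Q -> derivable_pt_lim (along3 g q Q) x (dalong3 g q Q x).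
Proof.
  intros Hg Hq HQ.
  assert (C0 : continuous3 (fun _ _ _ => 0)).
  { intros x0 u v eps Heps. exists 1. split; [lra|]. intros. rewrite Rminus_diag, Rabs_R0. exact Heps. }
  refine (eq_ind _ (derivable_pt_lim _ x) _ _ _).
  - apply (derivable_pt_lim_along_partials (lift3 g) _ _ _ _ _ q Q x (C1_3_has_partials_lift3 g Hg));
      auto; apply continuous5_lift3; auto; apply C1_3_continuous_partial; auto; lia.
  - unfold dalong3, along3, along, lift3. ring.
Qed.

Lemma continuity_pt_dalong3 g q Q x :
  C1_3 g -> C2_fun q -> C2_fun Q -> continuity_pt (dalong3 g q Q) x.
Proof.
  intros Hg Hq HQ. unfold dalong3.
  repeat first [apply continuity_pt_plus | apply continuity_pt_mult];
    auto using C2_fun_continuity_deriv; apply continuity_pt_along3; auto;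
    apply C1_3_continuous_partial; auto; lia.
Qed.

Definition rund_trautman (L : fun5) (tau zl zu : fun3) (q Q : R -> R) (x : R) : R :=
  along (partial5 L 1) q Q x * along3 tau q Q x + along (partial5 L 2) q Q x * along3 zl q Q x
  + along (partial5 L 3) q Q x * along3 zu q Q x
  + along (partial5 L 4) q Q x * (dalong3 zl q Q x - deriv q x * dalong3 tau q Q x)
  + along (partial5 L 5) q Q x * (dalong3 zu q Q x - deriv Q x * dalong3 tau q Q x)
  + along L q Q x * dalong3 tau q Q x.

Lemma derivable_pt_lim_noether_C L tau zl zu q Q x :
  C1_5 L -> C1_3 tau -> C1_3 zl -> C1_3 zu -> C2_fun q -> C2_fun Q ->
  derivable_pt_lim (along (partial5 L 4) q Q) x (along (partial5 L 2) q Q x) ->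
  derivable_pt_lim (along (partial5 L 5) q Q) x (along (partial5 L 3) q Q x) ->
  derivable_pt_lim (noether_C L tau zl zu q Q) x (rund_trautman L tau zl zu q Q x).
Proof.
  intros HL Htau Hzl Hzu Hq HQ EL4 EL5. unfold noether_C.
  refine (eq_ind _ (derivable_pt_lim _ x) _ _ _).
  - repeat first [apply derivable_pt_lim_minus | apply derivable_pt_lim_plus
                 | apply derivable_pt_lim_mult];
      first [exact EL4 | exact EL5 | apply derivable_pt_lim_along3
            | apply derivable_pt_lim_along | apply C2_fun_derivable_deriv]; assumption.
  - unfold rund_trautman, dalong, along3. ring.
Qed.

Lemma continuity_pt_rund_trautman L tau zl zu q Q x :
  C1_5 L -> C1_3 tau -> C1_3 zl -> C1_3 zu -> C2_fun q -> C2_fun Q ->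
  continuity_pt (rund_trautman L tau zl zu q Q) x.
Proof.
  intros HL Htau Hzl Hzu Hq HQ. unfold rund_trautman.
  repeat first [apply continuity_pt_minus | apply continuity_pt_plus | apply continuity_pt_mult];
    first [ apply continuity_pt_along; auto; first [apply (proj1 HL) | apply C1_5_continuous_partial; auto; lia]
          | apply continuity_pt_along3; auto;
              first [apply (proj1 Htau) | apply (proj1 Hzl) | apply (proj1 Hzu)
                    | apply C1_3_continuous_partial; auto; lia]
          | apply C2_fun_continuity_deriv; auto ].
Qed.

Lemma RInt_affine_bound (F : R -> R) c d K M :
  ex_RInt F c d -> (forall y, Rmin c d <= y <= Rmax c d -> Rabs (F y - K) <= M) ->
  Rabs (RInt F c d - K * (d - c)) <= M * Rabs (d - c).
Proof.
  intros HF HM. rewrite (Rmult_comm M).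
  apply (norm_RInt_le_const_abs (fun y => F y - K)); [exact HM|].
  replace (RInt F c d - K * (d - c)) with (minus (RInt F c d) (scal (d - c) K))
    by (unfold minus, plus, opp, scal; simpl; unfold mult; simpl; ring).
  exact (is_RInt_minus _ _ _ _ _ _ (RInt_correct _ _ _ HF) (is_RInt_const c d K)).
Qed.

Lemma between_mult_nonpos c d y : Rmin c d <= y <= Rmax c d -> (c - y) * (d - y) <= 0.
Proof. unfold Rmin, Rmax. destruct (Rle_dec c d); intros; nra. Qed.

Lemma has_slope_RInt_right f x0 b :
  x0 < b -> continuity_pt f x0 -> (forall t, x0 < t < b -> ex_RInt f x0 t) ->
  has_slope (fun k => 0 < k < b - x0) (fun k => RInt f x0 (x0 + k)) 0 (f x0).
Proof.
  intros Hb Hf Hint. set (D := fun k => 0 < k < b - x0).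
  assert (HD : forall k, D k -> k <> 0) by (unfold D; intros; lra).
  apply (has_slope_ext _ (fun k => 0 + k * f x0 + (RInt f x0 (x0 + k) - f x0 * k)));
    [intros; ring|].
  apply (has_slope_affine D HD).
  apply (has_slope_little_o D HD _ (fun k => k) 1); [|exact (has_slope_id D HD)].
  intros eta Heta. destruct (continuity_pt_ball _ _ Hf eta Heta) as [d [Hd Bf]].
  exists d; split; [exact Hd|]. intros k Dk Hk. unfold D in Dk.
  rewrite Rabs_right in Hk by lra.
  replace k with (x0 + k - x0) at 2 3 by ring.
  apply RInt_affine_bound; [apply Hint; lra|].
  intros y Hy. rewrite Rmin_left, Rmax_right in Hy by lra.
  left. apply Bf. rewrite Rabs_right; lra.
Qed.

Lemma has_slope_RInt_comp_right g X h x0 b l :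
  x0 < b -> continuity_pt h x0 -> continuity X -> derivable_pt_lim X x0 l ->
  (forall s, x0 <= s < b -> g (X s) = h s) ->
  (forall t, x0 < t < b -> ex_RInt g (X x0) (X t)) ->
  has_slope (fun k => 0 < k < b - x0) (fun k => RInt g (X x0) (X (x0 + k))) 0 (h x0 * l).
Proof.
  intros Hb Hh HX DX Hgh Hint. set (D := fun k => 0 < k < b - x0).
  assert (HD : forall k, D k -> k <> 0) by (unfold D; intros; lra).
  set (Y := fun k => X (x0 + k) - X x0).
  assert (HY : has_slope D Y 0 l).
  { apply (has_slope_eq _ _ (X x0 + - X x0) (l + 0)); [ring | ring |].
    apply has_slope_plus; [| apply has_slope_const].
    apply (has_slope_subdomain (fun k => k <> 0)); [exact HD|].
    apply derivable_pt_lim_has_slope, DX. }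
  apply (has_slope_ext _ (fun k => h x0 * Y k + (RInt g (X x0) (X (x0 + k)) - h x0 * Y k)));
    [intros; ring|].
  apply (has_slope_eq _ _ (h x0 * 0 + 0) (0 * 0 + h x0 * l + 0)); [ring | ring |].
  apply has_slope_plus; [apply (has_slope_mult D HD); [apply has_slope_const | exact HY]|].
  apply (has_slope_little_o D HD _ Y l); [|exact HY].
  intros eta Heta. destruct (continuity_pt_ball _ _ Hh eta Heta) as [d [Hd Bh]].
  exists d; split; [exact Hd|]. intros k Dk Hk. unfold D in Dk. unfold Y.
  rewrite Rabs_right in Hk by lra.
  apply RInt_affine_bound; [apply Hint; lra|].
  intros y Hy.
  destruct (IVT_cor (fun s => X s - y) x0 (x0 + k)) as [s [Hs Es]];
    [ intro s; apply continuity_pt_minus; [apply HX | apply continuity_pt_const; intros ? ?; reflexivity]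
    | lra | apply between_mult_nonpos, Hy |].
  replace y with (X s) by lra. rewrite Hgh by lra.
  left. apply Bh. rewrite Rabs_right; lra.
Qed.

Lemma integrand_eq_of_integral_eq f g X h x0 b l :
  x0 < b -> continuity_pt f x0 -> continuity_pt h x0 -> continuity X -> derivable_pt_lim X x0 l ->
  (forall s, x0 <= s < b -> g (X s) = h s) ->
  (forall t, x0 < t < b -> integral_eq f x0 t g (X x0) (X t)) ->
  f x0 = h x0 * l.
Proof.
  intros Hb Hf Hh HX DX Hgh Hint.
  apply (has_slope_unique (fun k => 0 < k < b - x0) (fun k => RInt f x0 (x0 + k)) 0).
  - apply adhDa_right_interval. lra.
  - apply has_slope_RInt_right; [exact Hb | exact Hf|].
    intros t Ht. destruct (Hint t Ht) as [p1 _]. exact (ex_RInt_Reals_1 _ _ _ p1).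
  - apply (has_slope_ext _ (fun k => RInt g (X x0) (X (x0 + k)))).
    + intros k Hk. destruct (Hint (x0 + k) ltac:(lra)) as [p1 [p2 E]].
      rewrite (RInt_Reals _ _ _ p1), (RInt_Reals _ _ _ p2). symmetry. exact E.
    + apply has_slope_RInt_comp_right; auto.
      intros t Ht. destruct (Hint t Ht) as [_ [p2 _]]. exact (ex_RInt_Reals_1 _ _ _ p2).
Qed.

Lemma derivable_pt_lim_perturb f T r eps y df dT dr :
  derivable_pt_lim f y df -> derivable_pt_lim T y dT -> derivable_pt_lim r y dr ->
  derivable_pt_lim (fun z => f z + eps * T z + r z) y (df + eps * dT + dr).
Proof.
  intros Hf HT Hr. refine (eq_ind _ (derivable_pt_lim _ y) _ _ _).
  - apply derivable_pt_lim_plus; [apply derivable_pt_lim_plus|]; [exact Hf | | exact Hr].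
    apply derivable_pt_lim_mult; [apply derivable_pt_lim_const | exact HT].
  - cbv beta. ring.
Qed.

Lemma continuity_pt_perturb f T r eps y :
  continuity_pt f y -> continuity_pt T y -> continuity_pt r y ->
  continuity_pt (fun z => f z + eps * T z + r z) y.
Proof.
  intros Hf HT Hr. apply continuity_pt_plus; [apply continuity_pt_plus|]; auto.
  apply continuity_pt_mult; [apply continuity_pt_const; intros ? ?; reflexivity | exact HT].
Qed.

Lemma deriv_of_comp_eq (F Y A : R -> R) dY dA a b s :
  a < s < b -> (forall y, a < y < b -> F (Y y) = A y) -> differentiable_at F (Y s) ->
  derivable_pt_lim Y s dY -> derivable_pt_lim A s dA -> dY <> 0 -> deriv F (Y s) = dA / dY.
Proof.
  intros Hs E HF DY DA HdY.
  assert (DFY := derivable_pt_lim_comp Y F s dY (deriv F (Y s)) DY (derivable_pt_lim_deriv _ _ HF)).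
  assert (DA' : derivable_pt_lim (comp F Y) s dA).
  { apply derivable_pt_lim_has_slope. apply derivable_pt_lim_has_slope in DA.
    intros eps Heps. destruct (DA eps Heps) as [d [Hd Bd]].
    exists (Rmin d (Rmin (s - a) (b - s))). split; [repeat apply Rmin_pos; lra|].
    intros h [Hh0 Hh]. simpl in Hh |- *. unfold Rdist in Hh |- *. rewrite Rminus_0_r in Hh.
    assert (M1 := Rmin_l d (Rmin (s - a) (b - s))). assert (M2 := Rmin_r d (Rmin (s - a) (b - s))).
    assert (M3 := Rmin_l (s - a) (b - s)). assert (M4 := Rmin_r (s - a) (b - s)).
    apply Rabs_def2 in Hh. unfold comp. rewrite !E by lra.
    apply (Bd h). split; [exact Hh0|]. simpl. unfold Rdist. rewrite Rminus_0_r. apply Rabs_def1; lra. }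
  rewrite <- (uniqueness_limite _ _ _ _ DFY DA'). field. exact HdY.
Qed.

Lemma small_rem_has_slope a b rho x e0 :
  small_rem a b rho -> a <= x <= b -> has_slope (fun e => 0 < e < e0) (fun e => rho e x) 0 0.
Proof.
  intros H Hx eps Heps.
  destruct (H (eps / 2) ltac:(lra)) as [d [Hd Hr]]. exists d; split; [exact Hd|].
  intros e [De He]. simpl in *. unfold Rdist in *. rewrite Rminus_0_r in *.
  rewrite Rabs_right in He by lra. specialize (Hr e ltac:(lra) x Hx).
  rewrite Rminus_0_r, Rabs_div, (Rabs_right e) by lra.
  apply Rle_lt_trans with (eps / 2); [|lra]. apply Rle_div_l; lra.
Qed.

Lemma eq0_closed_of_open E a b x :
  a < b -> (forall y, continuity_pt E y) -> (forall y, a < y < b -> E y = 0) ->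
  a <= x <= b -> E x = 0.
Proof.
  intros Hab HE HZ Hx. destruct (Req_dec (E x) 0) as [|Hne]; [assumption | exfalso].
  destruct (continuity_pt_ball _ _ (HE x) _ (Rabs_pos_lt _ Hne)) as [d [Hd Bd]].
  set (t := Rmin 1 (d / (2 * (b - a)))).
  assert (Ht1 : t <= 1) by apply Rmin_l.
  assert (Htd : t <= d / (2 * (b - a))) by apply Rmin_r.
  assert (Ht0 : 0 < t) by (apply Rmin_pos; [lra | apply Rdiv_lt_0_compat; lra]).
  assert (Htd' : t * (b - a) <= d / 2).
  { apply Rmult_le_compat_r with (r := b - a) in Htd; [|lra].
    replace (d / (2 * (b - a)) * (b - a)) with (d / 2) in Htd by (field; lra). exact Htd. }
  set (y := x + t * ((a + b) / 2 - x)).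
  assert (Hy : a < y < b) by (unfold y; nra).
  assert (Hyx : Rabs (y - x) < d) by (apply Rabs_def1; unfold y; nra).
  specialize (Bd y Hyx). rewrite (HZ y Hy), Rminus_0_l, Rabs_Ropp in Bd. lra.
Qed.

Section Invariance.

Variables (a b : R) (L : fun5) (tau zl zu : fun3) (q Q : R -> R)
  (X Ql Qu rho0 rho1 rho2 drho0 drho1 drho2 : R -> R -> R).
Hypotheses (Hab : a < b) (HL : C1_5 L) (Htau : C1_3 tau) (Hzl : C1_3 zl) (Hzu : C1_3 zu)
  (Hq : C2_fun q) (HQ : C2_fun Q)
  (R0 : rem_ok a b rho0 drho0) (R1 : rem_ok a b rho1 drho1) (R2 : rem_ok a b rho2 drho2)
  (Htransf : forall eps x, 0 < eps -> a <= x <= b ->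
     X eps x = x + eps * tau x (q x) (Q x) + rho0 eps x /\
     Ql eps (X eps x) = q x + eps * zl x (q x) (Q x) + rho1 eps x /\
     Qu eps (X eps x) = Q x + eps * zu x (q x) (Q x) + rho2 eps x /\
     differentiable_at (Ql eps) (X eps x) /\ differentiable_at (Qu eps) (X eps x))
  (Hinv : forall eps ta tb, 0 < eps -> a <= ta -> ta <= tb -> tb <= b ->
     integral_eq (along L q Q) ta tb (along L (Ql eps) (Qu eps)) (X eps ta) (X eps tb)).

(* [qlhat eps x] and [quhat eps x] are the transformed level functions read at
   [xhat eps x]; the [d]-versions are their derivatives with respect to [x]. *)
Definition xhat (eps y : R) : R := y + eps * along3 tau q Q y + rho0 eps y.
Definition dxhat (eps y : R) : R := 1 + eps * dalong3 tau q Q y + drho0 eps y.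
Definition qlhat (eps y : R) : R := q y + eps * along3 zl q Q y + rho1 eps y.
Definition dqlhat (eps y : R) : R := deriv q y + eps * dalong3 zl q Q y + drho1 eps y.
Definition quhat (eps y : R) : R := Q y + eps * along3 zu q Q y + rho2 eps y.
Definition dquhat (eps y : R) : R := deriv Q y + eps * dalong3 zu q Q y + drho2 eps y.

Lemma derivable_pt_lim_xhat eps y : 0 < eps -> derivable_pt_lim (xhat eps) y (dxhat eps y).
Proof.
  intros He. apply derivable_pt_lim_perturb;
    [apply derivable_pt_lim_id | apply derivable_pt_lim_along3; auto | apply (proj1 R0); exact He].
Qed.

Lemma derivable_pt_lim_qlhat eps y : 0 < eps -> derivable_pt_lim (qlhat eps) y (dqlhat eps y).
Proof.
  intros He. apply derivable_pt_lim_perturb;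
    [apply C2_fun_derivable; auto | apply derivable_pt_lim_along3; auto | apply (proj1 R1); exact He].
Qed.

Lemma derivable_pt_lim_quhat eps y : 0 < eps -> derivable_pt_lim (quhat eps) y (dquhat eps y).
Proof.
  intros He. apply derivable_pt_lim_perturb;
    [apply C2_fun_derivable; auto | apply derivable_pt_lim_along3; auto | apply (proj1 R2); exact He].
Qed.

Lemma dxhat_ge_half : exists e0, 0 < e0 /\
  forall eps x, 0 < eps < e0 -> a <= x <= b -> 1 / 2 <= dxhat eps x.
Proof.
  destruct (continuity_ab_maj (fun x => Rabs (dalong3 tau q Q x)) a b) as [xM [HM _]];
    [lra | intros x _; apply (continuity_pt_comp _ Rabs), Rcontinuity_abs; apply continuity_pt_dalong3; auto |].
  set (M := Rabs (dalong3 tau q Q xM)). assert (HM0 : 0 <= M) by apply Rabs_pos.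
  destruct R0 as (_ & _ & _ & Hsmall).
  destruct (Hsmall (1 / 4) ltac:(lra)) as [d [Hd Bd]].
  set (e0 := Rmin d (Rmin 1 (1 / (4 * (M + 1))))).
  assert (E1 : e0 <= d) by apply Rmin_l.
  assert (E2 : e0 <= 1) by (eapply Rle_trans; [apply Rmin_r | apply Rmin_l]).
  assert (E3 : e0 <= 1 / (4 * (M + 1))) by (eapply Rle_trans; [apply Rmin_r | apply Rmin_r]).
  assert (He0 : 0 < e0).
  { repeat apply Rmin_pos; try lra. apply Rdiv_lt_0_compat; lra. }
  exists e0. split; [exact He0|]. intros eps x He Hx.
  specialize (Bd eps ltac:(lra) x Hx). specialize (HM x Hx). cbv beta in HM. fold M in HM.
  assert (HeM : eps * M <= 1 / 4).
  { apply Rle_trans with (1 / (4 * (M + 1)) * (M + 1)); [apply Rmult_le_compat; lra|].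
    right. field. lra. }
  apply Rabs_le_between in Bd. apply Rabs_le_between in HM.
  unfold dxhat. nra.
Qed.

Lemma transformed_integrand eps x0 :
  0 < eps -> a < x0 < b -> (forall x, a <= x <= b -> dxhat eps x <> 0) ->
  along L q Q x0 =
  L (xhat eps x0) (qlhat eps x0) (quhat eps x0)
    (dqlhat eps x0 / dxhat eps x0) (dquhat eps x0 / dxhat eps x0) * dxhat eps x0.
Proof.
  intros He Hx0 Hdx.
  assert (EX : forall y, a <= y <= b -> X eps y = xhat eps y)
    by (intros y Hy; apply (Htransf eps y He Hy)).
  assert (Eql : forall y, a < y < b -> Ql eps (xhat eps y) = qlhat eps y)
    by (intros y Hy; rewrite <- EX by lra; apply (Htransf eps y He); lra).
  assert (Equ : forall y, a < y < b -> Qu eps (xhat eps y) = quhat eps y)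
    by (intros y Hy; rewrite <- EX by lra; apply (Htransf eps y He); lra).
  assert (Cx : forall y, continuity_pt (xhat eps) y)
    by (intro y; exact (derivable_pt_lim_continuity_pt _ _ _ (derivable_pt_lim_xhat eps y He))).
  assert (Cdx : continuity_pt (dxhat eps) x0).
  { apply continuity_pt_perturb; [apply continuity_pt_const; intros ? ?; reflexivity
      | apply continuity_pt_dalong3; auto | apply (proj1 (proj2 R0)), He]. }
  apply (integrand_eq_of_integral_eq (along L q Q) (along L (Ql eps) (Qu eps)) (xhat eps)
    (fun y => L (xhat eps y) (qlhat eps y) (quhat eps y)
                (dqlhat eps y / dxhat eps y) (dquhat eps y / dxhat eps y)) x0 b).
  - lra.
  - apply continuity_pt_along; auto. apply HL.
  - apply continuity_pt_comp5; [apply HL | apply Cx | | | |].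
    + exact (derivable_pt_lim_continuity_pt _ _ _ (derivable_pt_lim_qlhat eps x0 He)).
    + exact (derivable_pt_lim_continuity_pt _ _ _ (derivable_pt_lim_quhat eps x0 He)).
    + apply continuity_pt_div; [| exact Cdx | apply Hdx; lra].
      apply continuity_pt_perturb; [apply C2_fun_continuity_deriv; auto
        | apply continuity_pt_dalong3; auto | apply (proj1 (proj2 R1)), He].
    + apply continuity_pt_div; [| exact Cdx | apply Hdx; lra].
      apply continuity_pt_perturb; [apply C2_fun_continuity_deriv; auto
        | apply continuity_pt_dalong3; auto | apply (proj1 (proj2 R2)), He].
  - exact Cx.
  - apply derivable_pt_lim_xhat, He.
  - intros s Hs. assert (Hs' : a <= s <= b) by lra.
    destruct (Htransf eps s He Hs') as (_ & _ & _ & Dql & Dqu). rewrite EX in Dql, Dqu by exact Hs'.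
    unfold along. rewrite Eql, Equ by lra.
    rewrite (deriv_of_comp_eq (Ql eps) (xhat eps) (qlhat eps) (dxhat eps s) (dqlhat eps s) a b s),
      (deriv_of_comp_eq (Qu eps) (xhat eps) (quhat eps) (dxhat eps s) (dquhat eps s) a b s);
      auto using derivable_pt_lim_xhat, derivable_pt_lim_qlhat, derivable_pt_lim_quhat; lra.
  - intros t Ht. rewrite <- !EX by lra. apply Hinv; lra.
Qed.

Lemma rund_trautman_eq0_interior x0 : a < x0 < b -> rund_trautman L tau zl zu q Q x0 = 0.
Proof.
  intros Hx0. assert (Hx0' : a <= x0 <= b) by lra.
  destruct dxhat_ge_half as [e0 [He0 Hhalf]].
  set (D := fun e => 0 < e < e0).
  assert (HD : forall e, D e -> e <> 0) by (unfold D; intros; lra).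
  assert (Hdx : forall e, D e -> dxhat e x0 <> 0) by (intros e De; specialize (Hhalf e x0 De Hx0'); lra).
  destruct R0 as (_ & _ & S0 & dS0), R1 as (_ & _ & S1 & dS1), R2 as (_ & _ & S2 & dS2).
  assert (Sx := has_slope_affine D HD _ x0 (along3 tau q Q x0) (small_rem_has_slope _ _ _ _ e0 S0 Hx0')).
  assert (Sql := has_slope_affine D HD _ (q x0) (along3 zl q Q x0) (small_rem_has_slope _ _ _ _ e0 S1 Hx0')).
  assert (Squ := has_slope_affine D HD _ (Q x0) (along3 zu q Q x0) (small_rem_has_slope _ _ _ _ e0 S2 Hx0')).
  assert (Sdx := has_slope_affine D HD _ 1 (dalong3 tau q Q x0) (small_rem_has_slope _ _ _ _ e0 dS0 Hx0')).
  assert (Sdql := has_slope_affine D HD _ (deriv q x0) (dalong3 zl q Q x0)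
                    (small_rem_has_slope _ _ _ _ e0 dS1 Hx0')).
  assert (Sdqu := has_slope_affine D HD _ (deriv Q x0) (dalong3 zu q Q x0)
                    (small_rem_has_slope _ _ _ _ e0 dS2 Hx0')).
  assert (Sinv := has_slope_inv D HD _ _ _ Hdx R1_neq_R0 Sdx).
  assert (Sp : has_slope D (fun e => dqlhat e x0 * / dxhat e x0) (deriv q x0)
                 (dalong3 zl q Q x0 - deriv q x0 * dalong3 tau q Q x0)).
  { eapply has_slope_eq; [| | exact (has_slope_mult D HD _ _ _ _ _ _ Sdql Sinv)]; field. }
  assert (Sw : has_slope D (fun e => dquhat e x0 * / dxhat e x0) (deriv Q x0)
                 (dalong3 zu q Q x0 - deriv Q x0 * dalong3 tau q Q x0)).
  { eapply has_slope_eq; [| | exact (has_slope_mult D HD _ _ _ _ _ _ Sdqu Sinv)]; field. }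
  assert (SL := has_slope_comp5 D HD L _ _ _ _ _ _ _ _ _ _ _ _ _ _ _ _ _ _ _ _
    (C1_5_has_partials L HL) (C1_5_continuous_partial L 1 HL ltac:(lia))
    (C1_5_continuous_partial L 2 HL ltac:(lia)) (C1_5_continuous_partial L 3 HL ltac:(lia))
    (C1_5_continuous_partial L 4 HL ltac:(lia)) (C1_5_continuous_partial L 5 HL ltac:(lia))
    Sx Sql Squ Sp Sw).
  assert (SPhi : has_slope D (fun e => L (xhat e x0) (qlhat e x0) (quhat e x0)
      (dqlhat e x0 / dxhat e x0) (dquhat e x0 / dxhat e x0) * dxhat e x0)
      (along L q Q x0) (rund_trautman L tau zl zu q Q x0)).
  { eapply has_slope_eq; [| | exact (has_slope_mult D HD _ _ _ _ _ _ SL Sdx)].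
    - unfold along. ring.
    - unfold rund_trautman, along. ring. }
  apply (has_slope_unique D _ _ _ _ (adhDa_right_interval e0 He0) SPhi).
  apply (has_slope_ext _ (fun _ => along L q Q x0)); [|apply has_slope_const].
  intros e De. apply transformed_integrand; [unfold D in De; lra | exact Hx0 |].
  intros x Hx. specialize (Hhalf e x De Hx). lra.
Qed.

Lemma rund_trautman_eq0 x : a <= x <= b -> rund_trautman L tau zl zu q Q x = 0.
Proof.
  apply eq0_closed_of_open; [exact Hab | | exact rund_trautman_eq0_interior].
  intro y. apply continuity_pt_rund_trautman; assumption.
Qed.

Lemma noether_C_conserved x : a <= x <= b ->
  derivable_pt_lim (along (partial5 L 4) q Q) x (along (partial5 L 2) q Q x) ->
  derivable_pt_lim (along (partial5 L 5) q Q) x (along (partial5 L 3) q Q x) ->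
  derivable_pt_lim (noether_C L tau zl zu q Q) x 0.
Proof.
  intros Hx EL4 EL5.
  assert (D := derivable_pt_lim_noether_C L tau zl zu q Q x HL Htau Hzl Hzu Hq HQ EL4 EL5).
  rewrite (rund_trautman_eq0 x Hx) in D. exact D.
Qed.

End Invariance.

Theorem mainTheorem3 (a b : R) (Ll Lu : R -> fun5) (tau : fun3)
    (zl zu : R -> fun3) :
  a < b ->
  (forall r, 0 <= r <= 1 -> C2_5 (Ll r) /\ C2_5 (Lu r)) ->
  C1_3 tau ->
  (forall r, 0 <= r <= 1 -> C1_3 (zl r) /\ C1_3 (zu r)) ->
  fuzzy_invariant a b Ll Lu tau zl zu ->
  forall (qt ql qu : R -> R -> R),
    fuzzy_valued_with_levels a b qt ql qu ->
    C2_levels ql qu ->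
    fuzzy_EL a b Ll Lu ql qu ->
    forall r, 0 <= r <= 1 -> forall x, a <= x <= b ->
      derivable_pt_lim (noether_C (Ll r) tau (zl r) (zu r) (ql r) (qu r)) x 0 /\
      derivable_pt_lim (noether_C (Lu r) tau (zl r) (zu r) (ql r) (qu r)) x 0.
Proof.
  intros Hab HL Htau Hz Hinv qt ql qu Hfv HC2 HEL r Hr x Hx.
  destruct (HL r Hr) as [[HLl _] [HLu _]], (Hz r Hr) as [Hzl Hzu], (HC2 r Hr) as [Hql Hqu].
  destruct (HEL r Hr x Hx) as (ELl4 & ELl5 & ELu4 & ELu5).
  destruct (Hinv qt ql qu Hfv HC2 r Hr)
    as (X & Ql & Qu & rho0 & rho1 & rho2 & drho0 & drho1 & drho2 & R0 & R1 & R2 & Htransf & Hint).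
  split.
  - apply (noether_C_conserved a b (Ll r) tau (zl r) (zu r) (ql r) (qu r)
             X Ql Qu rho0 rho1 rho2 drho0 drho1 drho2); auto.
    intros eps ta tb He H1 H2 H3. exact (proj1 (Hint eps ta tb He H1 H2 H3)).
  - apply (noether_C_conserved a b (Lu r) tau (zl r) (zu r) (ql r) (qu r)
             X Ql Qu rho0 rho1 rho2 drho0 drho1 drho2); auto.
    intros eps ta tb He H1 H2 H3. exact (proj2 (Hint eps ta tb He H1 H2 H3)).
Qed.
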